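(* Let $M,K\in\mathbb{R}^{m\times m}$ be symmetric positive semidefinite matrices with at least one of them positive definite, and let $\nu,\omega,\theta,H_1,H_2,R,P_\alpha$ be as defined in the context. Then $\rho(P_\alpha)<1$ for every $\alpha>0$, i.e. the MBAS iteration converges unconditionally.
   Context: $\nu>0$, $\omega>0$, $\theta=1+\nu\omega^2$, $I$ is the $m\times m$ identity, $H_1=\begin{pmatrix} M&0\\0&M\end{pmatrix}$, $H_2=\begin{pmatrix} K&0\\0&K\end{pmatrix}$, $R=\frac{1}{\sqrt{\nu\theta}}\begin{pmatrix} -i\omega\nu I & \sqrt{\nu} I\\ -\sqrt{\nu} I & i\omega\nu I\end{pmatrix}$, and for $\alpha>0$, $P_\alpha=(\alpha I_{2m}+\sqrt{\nu\theta}H_2)^{-1}(\alpha I_{2m}+\theta RH_1)(\alpha I_{2m}+\theta H_1)^{-1}(\alpha I_{2m}-\sqrt{\nu\theta}RH_2)$. $\rho(\cdot)$ denotes spectral radius. *)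

From HB Require Import structures.
From mathcomp Require Import all_boot all_order all_algebra.
From mathcomp Require Import complex.
Set Implicit Arguments. Unset Strict Implicit. Unset Printing Implicit Defensive.
Import Order.TTheory GRing.Theory Num.Theory.
Local Open Scope ring_scope.

Definition spsd (R : rcfType) (m : nat) (A : 'M[R]_m) : Prop :=
  A^T = A /\ forall x : 'cV[R]_m, 0 <= (x^T *m A *m x) 0 0.

Definition spd (R : rcfType) (m : nat) (A : 'M[R]_m) : Prop :=
  A^T = A /\ forall x : 'cV[R]_m, x != 0 -> 0 < (x^T *m A *m x) 0 0.

Definition cmx (R : rcfType) (m n : nat) (A : 'M[R]_(m, n)) : 'M[R[i]]_(m, n) :=
  map_mx (fun x => (x%:C)%C) A.

(* spectral radius < r : every eigenvalue has modulus < r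
   (rho(A) is the maximum of the moduli of the finitely many eigenvalues) *)
Definition spectral_radius_lt (C : numClosedFieldType) (n : nat) (A : 'M[C]_n) (r : C) : Prop :=
  forall lam : C, eigenvalue A lam -> `|lam| < r.

Section MBAS.
Variables (R : rcfType) (m : nat) (M K : 'M[R]_m) (nu omega alpha : R).

Definition theta : R := 1 + nu * omega ^+ 2.

Definition H1 : 'M[R[i]]_(m + m) := cmx (block_mx M 0 0 M).
Definition H2 : 'M[R[i]]_(m + m) := cmx (block_mx K 0 0 K).

Definition sq : R[i] := ((Num.sqrt (nu * theta))%:C)%C.

Definition Rmx : 'M[R[i]]_(m + m) :=
  sq^-1 *: block_mx ((- 'i%C * ((omega * nu)%:C)%C) *: (1%:M : 'M[R[i]]_m))
                    (((Num.sqrt nu)%:C)%C *: 1%:M)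
                    (- ((Num.sqrt nu)%:C)%C *: 1%:M)
                    (('i%C * ((omega * nu)%:C)%C) *: 1%:M).

Definition Palpha : 'M[R[i]]_(m + m) :=
  let a := (alpha%:C)%C in
  let I2 : 'M[R[i]]_(m + m) := 1%:M in
  invmx (a *: I2 + sq *: H2) *m (a *: I2 + (theta%:C)%C *: (Rmx *m H1))
    *m invmx (a *: I2 + (theta%:C)%C *: H1) *m (a *: I2 - sq *: (Rmx *m H2)).
End MBAS.

From HB Require Import structures.
From mathcomp Require Import all_boot all_order all_algebra.
From mathcomp Require Import complex sesquilinear spectral ring.
Import Order.TTheory GRing.Theory Num.Theory.
Local Open Scope ring_scope.
Local Open Scope sesquilinear_scope.

(* Write P_alpha = C2^-1 B1 C1^-1 B2 with C_k = alpha + b_k N_k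
   and B_k = alpha +- b_k S N_k, where S = R is skew-Hermitian, S^2 = -1, and
   S commutes with the Hermitian positive semidefinite N_1 = H1, N_2 = H2.
   Then C_k C_k^* = B_k B_k^* + 2 alpha b_k N_k, so the half step
   x |-> x B_k C_k^-1 lowers the squared norm by 2 alpha b_k <z N_k, z> with
   z = x C_k^-1.  Following an eigenvector through both half steps gives
   |lambda|^2 |x|^2 = |x|^2 - (two nonnegative losses), and one loss is
   positive because M or K is definite. *)

Set Implicit Arguments. Unset Strict Implicit. Unset Printing Implicit Defensive.

Local Notation "''[' u , v ]" := (dotmx u v) : ring_scope.
Local Notation "''[' u ]" := (dotmx u u) : ring_scope.

Section ConjTranspose.
Variable C : numClosedFieldType.

Lemma trmxC_mul m n p (A : 'M[C]_(m, n)) (B : 'M[C]_(n, p)) :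
  (A *m B) ^t* = B ^t* *m A ^t*.
Proof. by rewrite trmx_mul map_mxM. Qed.

Lemma trmxC_add m n (A B : 'M[C]_(m, n)) : (A + B) ^t* = A ^t* + B ^t*.
Proof. by rewrite linearD map_mxD. Qed.

Lemma trmxC_scale m n c (A : 'M[C]_(m, n)) : (c *: A) ^t* = c^* *: A ^t*.
Proof. by rewrite linearZ map_mxZ. Qed.

Lemma trmxC_opp m n (A : 'M[C]_(m, n)) : (- A) ^t* = - A ^t*.
Proof. by rewrite linearN map_mxN. Qed.

Lemma trmxC1 n : (1%:M : 'M[C]_n) ^t* = 1%:M.
Proof. by rewrite trmx1 map_mx1. Qed.

End ConjTranspose.

Section CayleyContraction.
Variables (C : numClosedFieldType) (n : nat) (S N : 'M[C]_n) (a b : C).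
Hypotheses (N_herm : N ^t* = N) (S_skew : S ^t* = - S) (S_sqr : S *m S = - 1%:M)
  (SN_comm : S *m N = N *m S) (N_psd : forall z : 'rV[C]_n, 0 <= '[z *m N, z])
  (a_gt0 : 0 < a) (b_ge0 : 0 <= b).

Let Cm := a *: 1%:M + b *: N.
Let Bm := a *: 1%:M + b *: (S *m N).

Lemma dotmx_shift (z : 'rV[C]_n) : '[z *m Cm, z] = a * '[z] + b * '[z *m N, z].
Proof.
by rewrite /Cm mulmxDr -!scalemxAr mulmx1 !dotmxE mulmxDl -!scalemxAl !mxE.
Qed.

Lemma unitmx_shift : Cm \in unitmx.
Proof.
rewrite unitmxE unitfE; apply/negP => /det0P [z z_neq0 zC0].
have := dotmx_shift z; rewrite zC0 dotmxE mul0mx mxE => /esym/eqP.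
rewrite paddr_eq0 ?mulr_ge0 ?dnorm_ge0 ?(ltW a_gt0) //.
by rewrite mulf_eq0 dnorm_eq0 (negPf z_neq0) (gt_eqF a_gt0).
Qed.

Lemma shift_comm : Bm *m Cm = Cm *m Bm.
Proof.
rewrite /Bm /Cm !mulmxDl !mulmxDr -!scalemxAl -!scalemxAr !mulmx1 !mul1mx.
by rewrite mulmxA -SN_comm !scalerA (mulrC b a) addrACA.
Qed.

Lemma shift_mul_trmxC : Cm *m Cm ^t* = Bm *m Bm ^t* + (a * b *+ 2) *: N.
Proof.
have a_real : a^* = a := geC0_conj (ltW a_gt0).
have b_real : b^* = b := geC0_conj b_ge0.
have SNNS : S *m N *m (N *m S) = - (N *m N).
  by rewrite -SN_comm mulmxA -(mulmxA S N S) -SN_comm mulmxA S_sqr !mulNmx mul1mx.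
rewrite /Bm /Cm !trmxC_add !trmxC_scale trmxC_mul trmxC1 N_herm S_skew a_real b_real.
rewrite !mulmxDl !mulmxDr -!scalemxAl -!scalemxAr !mulmx1 !mul1mx !scalerA.
rewrite !mulmxN SNNS -SN_comm !scalerN opprK (mulrC b a) mulr2n scalerDl.
by rewrite [_ - _ + _]addrA subrK [RHS]addrACA [_ + (b * b) *: _]addrC.
Qed.

Lemma dnorm_shift (z : 'rV[C]_n) :
  '[z *m Cm] = '[z *m Bm] + (a * b *+ 2) * '[z *m N, z].
Proof.
rewrite !dotmxE !trmxC_mul !mulmxA -!(mulmxA z) shift_mul_trmxC.
by rewrite mulmxDl mulmxDr -scalemxAl -scalemxAr !mxE.
Qed.

Lemma dnorm_cayley (x : 'rV[C]_n) :
  '[x *m Bm *m invmx Cm] =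
  '[x] - (a * b *+ 2) * '[x *m invmx Cm *m N, x *m invmx Cm].
Proof.
have Cm_unit := unitmx_shift.
set z := x *m invmx Cm; have xE : x = z *m Cm by rewrite mulmxKV.
have -> : x *m Bm *m invmx Cm = z *m Bm.
  by rewrite xE -(mulmxA z) -shift_comm mulmxA mulmxK.
by rewrite xE dnorm_shift addrK.
Qed.
End CayleyContraction.

Section TwoStepIteration.
Variables (C : numClosedFieldType) (n : nat) (S N1 N2 : 'M[C]_n) (a b1 b2 : C).
Hypotheses (S_skew : S ^t* = - S) (S_sqr : S *m S = - 1%:M)
  (SN1_comm : S *m N1 = N1 *m S) (SN2_comm : S *m N2 = N2 *m S)
  (N1_herm : N1 ^t* = N1) (N2_herm : N2 ^t* = N2)
  (N1_psd : forall z : 'rV[C]_n, 0 <= '[z *m N1, z])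
  (N2_psd : forall z : 'rV[C]_n, 0 <= '[z *m N2, z])
  (N_pd : (forall z : 'rV[C]_n, z != 0 -> 0 < '[z *m N1, z]) \/
          (forall z : 'rV[C]_n, z != 0 -> 0 < '[z *m N2, z]))
  (a_gt0 : 0 < a) (b1_gt0 : 0 < b1) (b2_gt0 : 0 < b2).

Let C1 := a *: 1%:M + b1 *: N1.
Let B1 := a *: 1%:M + b1 *: (S *m N1).
Let C2 := a *: 1%:M + b2 *: N2.
Let B2 := a *: 1%:M - b2 *: (S *m N2).

Lemma two_step_eigenvalue_lt1 lam :
  eigenvalue (invmx C2 *m B1 *m invmx C1 *m B2) lam -> `|lam| < 1.
Proof.
move=> /eigenvalueP [v vP v_neq0].
have C1_unit : C1 \in unitmx := unitmx_shift N1_psd a_gt0 (ltW b1_gt0).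
have C2_unit : C2 \in unitmx := unitmx_shift N2_psd a_gt0 (ltW b2_gt0).
have B2E : B2 = a *: 1%:M + b2 *: (- S *m N2) by rewrite mulNmx scalerN.
have S'_skew : (- S) ^t* = - - S by rewrite trmxC_opp S_skew.
have S'_sqr : - S *m - S = - 1%:M by rewrite mulNmx mulmxN opprK.
have S'N2_comm : - S *m N2 = N2 *m - S by rewrite mulNmx mulmxN SN2_comm.
set x := v *m invmx C2; have vE : v = x *m C2 by rewrite mulmxKV.
have x_neq0 : x != 0 by apply: contra v_neq0 => /eqP x0; rewrite vE x0 mul0mx.
set y := x *m B1 *m invmx C1.
have yE : y *m B2 *m invmx C2 = lam *: x by rewrite /y /x scalemxAl -vP !mulmxA.
have := dnorm_cayley N1_herm S_skew S_sqr SN1_comm N1_psd a_gt0 (ltW b1_gt0) x.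
rewrite -/C1 -/B1 -/y; set z1 := x *m invmx C1 => step1.
have := dnorm_cayley N2_herm S'_skew S'_sqr S'N2_comm N2_psd a_gt0 (ltW b2_gt0) y.
rewrite -B2E -/C2 yE dnormZ step1 -addrA -opprD; set z2 := y *m invmx C2 => step2.
have [->|lam_neq0] := eqVneq lam 0; first by rewrite normr0 ltr01.
have z1_neq0 : z1 != 0.
  by apply: contra x_neq0 => /eqP z0; rewrite -(mulmxKV C1_unit x) -/z1 z0 mul0mx.
have z2_neq0 : z2 != 0.
  apply: contra lam_neq0 => /eqP z0.
  suff : lam *: x == 0 by rewrite scaler_eq0 (negPf x_neq0) orbF.
  by rewrite -yE -(mulmxKV C2_unit y) -/z2 z0 !mul0mx.
have loss_gt0 : 0 < a * b1 *+ 2 * '[z1 *m N1, z1] + a * b2 *+ 2 * '[z2 *m N2, z2].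
  have ab1_gt0 : 0 < a * b1 *+ 2 by rewrite pmulrn_lgt0 ?mulr_gt0.
  have ab2_gt0 : 0 < a * b2 *+ 2 by rewrite pmulrn_lgt0 ?mulr_gt0.
  case: N_pd => [N1_pd|N2_pd].
    by rewrite ltr_pwDl ?pmulr_rgt0 ?N1_pd ?mulr_ge0 ?(ltW ab2_gt0).
  by rewrite ltr_pwDr ?pmulr_rgt0 ?N2_pd ?mulr_ge0 ?(ltW ab1_gt0).
have : `|lam| ^+ 2 * '[x] < '[x] by rewrite step2 gtrBl.
by rewrite -[ltRHS]mul1r ltr_pM2r ?dnorm_gt0 // expr_lt1.
Qed.
End TwoStepIteration.

Lemma conj_real_complex (R : rcfType) (x : R) : (x%:C%C : R[i])^* = x%:C%C.
Proof. exact: conjc_real. Qed.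

Lemma conj_i (R : rcfType) : ('i%C : R[i])^* = - 'i%C.
Proof. by apply/eqP; rewrite eq_complex /= oppr0 !eqxx. Qed.

Section RealMatrices.
Variable R : rcfType.
Implicit Types (m n : nat).

Lemma cmx_mul m n p (A : 'M[R]_(m, n)) (B : 'M[R]_(n, p)) :
  cmx (A *m B) = cmx A *m cmx B.
Proof. exact: map_mxM. Qed.

Lemma trmxC_cmx m n (A : 'M[R]_(m, n)) : (cmx A) ^t* = cmx A^T.
Proof. by apply/matrixP => i j; rewrite !mxE conj_real_complex. Qed.

Lemma cmx_ReIm n (z : 'rV[R[i]]_n) :
  z = cmx (map_mx (@complex.Re R) z) + 'i%C *: cmx (map_mx (@complex.Im R) z).
Proof. by apply/matrixP => i j; rewrite !mxE [LHS]complexE. Qed.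

Lemma dotmx_cmx_sym n (P : 'M[R]_n) (u w : 'rV[R]_n) : P^T = P ->
  let z := cmx u + 'i%C *: cmx w in
  '[z *m cmx P, z] = ((u *m P *m u^T) 0 0 + (w *m P *m w^T) 0 0)%:C%C.
Proof.
move=> P_sym z.
have P_form_sym (x y : 'rV[R]_n) : y *m P *m x^T = x *m P *m y^T.
  rewrite (mx11_scalar (y *m P *m x^T)) -tr_scalar_mx -mx11_scalar.
  by rewrite !trmx_mul trmxK P_sym mulmxA.
rewrite dotmxE /z trmxC_add trmxC_scale !trmxC_cmx conj_i.
rewrite !(mulmxDl, mulmxDr, =^~ scalemxAl, =^~ scalemxAr) -!cmx_mul (P_form_sym u w).
move: (u *m P *m u^T) (u *m P *m w^T) (w *m P *m w^T) => A B D.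
rewrite !mxE !rmorphD /=.
have := sqr_i R; move: ('i%C) (A 0 0)%:C%C (B 0 0)%:C%C (D 0 0)%:C%C => i a b d i2.
have -> : i * (- i * d) = - i ^+ 2 * d by ring.
by rewrite i2 opprK mul1r; ring.
Qed.

Lemma spsd_cmx_dotmx_ge0 n (P : 'M[R]_n) (z : 'rV[R[i]]_n) :
  spsd P -> 0 <= '[z *m cmx P, z].
Proof.
move=> [P_sym P_psd]; rewrite [z]cmx_ReIm dotmx_cmx_sym // ler0c.
by apply: addr_ge0; rewrite -[X in X *m P]trmxK; apply: P_psd.
Qed.

Lemma spd_cmx_dotmx_gt0 n (P : 'M[R]_n) (z : 'rV[R[i]]_n) :
  spd P -> z != 0 -> 0 < '[z *m cmx P, z].
Proof.
move=> [P_sym P_pd] z_neq0; rewrite [z]cmx_ReIm dotmx_cmx_sym // ltcE /= eqxx /=.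
set u := map_mx _ z; set w := map_mx _ z.
have form_gt0 (x : 'rV[R]_n) : x != 0 -> 0 < (x *m P *m x^T) 0 0.
  by move=> x_neq0; rewrite -[X in X *m P]trmxK; apply: P_pd; rewrite trmx_eq0.
have form_ge0 (x : 'rV[R]_n) : 0 <= (x *m P *m x^T) 0 0.
  by have [->|/form_gt0/ltW //] := eqVneq x 0; rewrite !mul0mx mxE.
have [u0|u_neq0] := eqVneq u 0; last by rewrite ltr_pwDl ?form_gt0 ?form_ge0.
have w_neq0 : w != 0.
  apply: contra z_neq0 => /eqP w0.
  by rewrite [z]cmx_ReIm -/u -/w u0 w0 /cmx !map_mx0 scaler0 addr0.
by rewrite ltr_pwDr ?form_gt0 ?form_ge0.
Qed.

Lemma spd_spsd n (P : 'M[R]_n) : spd P -> spsd P.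
Proof.
move=> [P_sym P_pd]; split=> // x.
by have [->|/P_pd/ltW //] := eqVneq x 0; rewrite mulmx0 mxE.
Qed.

Lemma block_diag_sym n (P : 'M[R]_n) :
  P^T = P -> (block_mx P 0 0 P)^T = block_mx P 0 0 P.
Proof. by move=> P_sym; rewrite tr_block_mx !trmx0 P_sym. Qed.

Lemma block_diag_form n (P : 'M[R]_n) (x : 'cV[R]_(n + n)) :
  (x^T *m block_mx P 0 0 P *m x) 0 0 =
  ((usubmx x)^T *m P *m usubmx x) 0 0 + ((dsubmx x)^T *m P *m dsubmx x) 0 0.
Proof.
rewrite -{1 2}[x]vsubmxK tr_col_mx mul_row_block !mulmx0 addr0 add0r.
by rewrite mul_row_col mxE.
Qed.

Lemma spsd_block_diag n (P : 'M[R]_n) : spsd P -> spsd (block_mx P 0 0 P).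
Proof.
move=> [P_sym P_psd]; split=> [|x]; first exact: block_diag_sym.
by rewrite block_diag_form addr_ge0.
Qed.

Lemma spd_block_diag n (P : 'M[R]_n) : spd P -> spd (block_mx P 0 0 P).
Proof.
move=> P_spd; have [P_sym P_pd] := P_spd; have [_ P_psd] := spd_spsd P_spd.
split=> [|x x_neq0]; first exact: block_diag_sym.
have : (usubmx x != 0) || (dsubmx x != 0) by rewrite -negb_and -col_mx_eq0 vsubmxK.
by rewrite block_diag_form => /orP [/P_pd u_pos|/P_pd d_pos];
  [rewrite ltr_pwDl ?P_psd | rewrite ltr_pwDr ?P_psd].
Qed.
End RealMatrices.

Lemma scalar_block_diagC (K : comNzRingType) k (p q r t : K) (N : 'M[K]_k) :
  block_mx p%:M q%:M r%:M t%:M *m block_mx N 0 0 N =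
  block_mx N 0 0 N *m block_mx p%:M q%:M r%:M t%:M.
Proof.
by rewrite !mulmx_block !mulmx0 !mul0mx !addr0 !add0r !mul_scalar_mx !mul_mx_scalar.
Qed.

Lemma cmx_block_diag (R : rcfType) k (P : 'M[R]_k) :
  cmx (block_mx P 0 0 P) = block_mx (cmx P) 0 0 (cmx P).
Proof. by rewrite /cmx map_block_mx !map_mx0. Qed.

Section MBASSplitting.
Variables (R : rcfType) (m : nat) (nu omega : R).
Hypothesis nu_gt0 : 0 < nu.
Local Notation i := ('i%C : R[i]).
Let c : R[i] := (omega * nu)%:C%C.
Let v : R[i] := (Num.sqrt nu)%:C%C.

Lemma theta_gt0 : 0 < theta nu omega.
Proof. by rewrite ltr_pwDl ?ltr01 // mulr_ge0 ?sqr_ge0 ?ltW. Qed.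

Lemma sq_gt0 : 0 < sq nu omega.
Proof. by rewrite ltcE /= eqxx sqrtr_gt0 mulr_gt0 ?theta_gt0. Qed.

Lemma sq_sqr : sq nu omega ^+ 2 = c ^+ 2 + v ^+ 2.
Proof.
rewrite /sq -!rmorphXn -rmorphD !sqr_sqrtr ?mulr_ge0 ?(ltW theta_gt0) ?(ltW nu_gt0) //.
by congr (_%:C)%C; rewrite /theta; ring.
Qed.

Lemma Rmx_block : Rmx m nu omega =
  (sq nu omega)^-1 *: block_mx ((- i * c)%:M) v%:M (- v)%:M (i * c)%:M.
Proof. by rewrite /Rmx !scalemx1. Qed.

Lemma Rmx_skew : (Rmx m nu omega) ^t* = - Rmx m nu omega.
Proof.
rewrite Rmx_block trmxC_scale -scalerN geC0_conj ?invr_ge0 ?(ltW sq_gt0) //.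
rewrite tr_block_mx map_block_mx !tr_scalar_mx !map_scalar_mx opp_block_mx.
have conj_v : v^* = v := conj_real_complex _.
have conj_ic : (i * c)^* = - (i * c).
  by apply/eqP; rewrite eq_complex /=; apply/andP; split; apply/eqP; ring.
have conj_nic : (- i * c)^* = i * c.
  by apply/eqP; rewrite eq_complex /=; apply/andP; split; apply/eqP; ring.
by rewrite /= rmorphN /= conj_v conj_ic conj_nic -!raddfN /= !mulNr !opprK.
Qed.

Lemma Rmx_sqr : Rmx m nu omega *m Rmx m nu omega = - 1%:M.
Proof.
rewrite Rmx_block -scalemxAl -scalemxAr scalerA mulmx_block -!scalar_mxM -!raddfD.
have -> : - i * c * (- i * c) + v * - v = i ^+ 2 * c ^+ 2 - v ^+ 2 by ring.
have -> : - i * c * v + v * (i * c) = 0 by ring.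
have -> : - v * (- i * c) + i * c * - v = 0 by ring.
have -> : - v * v + i * c * (i * c) = i ^+ 2 * c ^+ 2 - v ^+ 2 by ring.
rewrite sqr_i mulN1r -opprD -sq_sqr raddf0 -scalar_mx_block -scalemx1 scalerA.
have sq_neq0 := lt0r_neq0 sq_gt0.
by rewrite (_ : _ * _ = -1) ?scaleN1r //; field.
Qed.

Lemma Rmx_block_diagC (P : 'M[R]_m) :
  Rmx m nu omega *m cmx (block_mx P 0 0 P) = cmx (block_mx P 0 0 P) *m Rmx m nu omega.
Proof.
by rewrite Rmx_block cmx_block_diag -scalemxAl scalar_block_diagC scalemxAr.
Qed.
End MBASSplitting.

Unset Implicit Arguments.

Theorem mainTheorem3 (R : rcfType) (m : nat) (M K : 'M[R]_m) (nu omega : R) :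
  spsd M -> spsd K -> (spd M \/ spd K) -> 0 < nu -> 0 < omega ->
  forall alpha : R, 0 < alpha ->
    spectral_radius_lt (Palpha M K nu omega alpha) 1.
Proof.
move=> M_psd K_psd MK_pd nu_gt0 _ alpha alpha_gt0 lam.
pose H (P : 'M[R]_m) := cmx (block_mx P 0 0 P).
have H_herm P : spsd P -> (H P) ^t* = H P.
  by case=> P_sym _; rewrite trmxC_cmx block_diag_sym.
have H_psd P : spsd P -> forall z, 0 <= '[z *m H P, z].
  by move=> /spsd_block_diag P_psd z; apply: spsd_cmx_dotmx_ge0.
have H_pd P : spd P -> forall z, z != 0 -> 0 < '[z *m H P, z].
  by move=> /spd_block_diag P_pd z; apply: spd_cmx_dotmx_gt0.
have N_pd : (forall z, z != 0 -> 0 < '[z *m H M, z]) \/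
              (forall z, z != 0 -> 0 < '[z *m H K, z]).
  by case: MK_pd => [/H_pd|/H_pd]; [left|right].
have alpha_gt0' : 0 < (alpha%:C)%C :> R[i] by rewrite ltcE /= eqxx.
have theta_gt0' : 0 < (theta nu omega)%:C%C :> R[i] by rewrite ltcE /= eqxx theta_gt0.
exact: (two_step_eigenvalue_lt1 (Rmx_skew m omega nu_gt0) (Rmx_sqr m omega nu_gt0)
  (Rmx_block_diagC nu omega M) (Rmx_block_diagC nu omega K)
  (H_herm _ M_psd) (H_herm _ K_psd) (H_psd _ M_psd) (H_psd _ K_psd) N_pd
  alpha_gt0' theta_gt0' (sq_gt0 omega nu_gt0)).
Qed.
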